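(* Let $C=(C_{i,j})$ be an $m\times n$ evolutionary stable (ES) configuration, where $n$ is divisible by $3$. Suppose that for some row index $i$ with $i+2\le m$, row $i+2$ is the string $101\,101\cdots101$ (i.e.\ $C_{i+2,l}=0$ if $l\equiv 2\pmod 3$ and $C_{i+2,l}=1$ otherwise, for all $1\le l\le n$). Then $C_{i,j}=0$ for every $j$ with $C_{i+2,j}=0$; that is, there is no $j$ with $C_{i+2,j}=0$ and $C_{i,j}=1$.
   Context: An $m\times n$ configuration is a $0$-$1$ matrix $C=(C_{i,j})$, $1\le i\le m$, $1\le j\le n$; $C_{i,j}=1$ means lot $(i,j)$ is occupied by a house. Row $1$ is the northernmost, row $m$ the southernmost; column $1$ westernmost, column $n$ easternmost. A house at $(i,j)$ is blocked from sunlight if the three lots $(i,j-1)$, $(i,j+1)$, $(i+1,j)$ all lie inside the grid and are all occupied (lots outside the grid never obstruct sunlight). $C$ is permissible if no house is blocked, and maximal if it is permissible and setting any single empty lot to $1$ yields a non-permissible configuration. A maximal configuration is resistant to predators if, for every empty lot, putting a house on it results in that new house being blocked; it is resistant to altruists if, for every empty lot, putting a house on it results in some other (already existing) house being blocked. An ES configuration is a maximal configuration resistant to both predators and altruists. *)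

From mathcomp Require Import all_boot.
Set Implicit Arguments. Unset Strict Implicit. Unset Printing Implicit Defensive.

(* An m x n configuration: C i j for 1 <= i <= m, 1 <= j <= n (1-based);
   values outside the grid are never inspected. *)
Definition config := nat -> nat -> bool.

Definition in_grid (m n i j : nat) : bool := (1 <= i <= m) && (1 <= j <= n).

Definition blocked (m n : nat) (C : config) (i j : nat) : bool :=
  [&& C i j, 2 <= j, j + 1 <= n, i + 1 <= m,
      C i (j - 1), C i (j + 1) & C (i + 1) j].

Definition permissible (m n : nat) (C : config) : Prop :=
  forall i j, in_grid m n i j -> ~~ blocked m n C i j.

Definition add_house (C : config) (a b : nat) : config :=
  fun i j => ((i == a) && (j == b)) || C i j.

Definition maximal (m n : nat) (C : config) : Prop :=
  permissible m n C /\
  forall a b, in_grid m n a b -> ~~ C a b -> ~ permissible m n (add_house C a b).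

Definition resistant_predators (m n : nat) (C : config) : Prop :=
  forall a b, in_grid m n a b -> ~~ C a b -> blocked m n (add_house C a b) a b.

Definition resistant_altruists (m n : nat) (C : config) : Prop :=
  forall a b, in_grid m n a b -> ~~ C a b ->
    exists i j, [/\ in_grid m n i j, (i, j) <> (a, b), C i j &
                    blocked m n (add_house C a b) i j].

Definition ES (m n : nat) (C : config) : Prop :=
  [/\ maximal m n C, resistant_predators m n C & resistant_altruists m n C].

From mathcomp Require Import all_boot zify.
Set Implicit Arguments. Unset Strict Implicit. Unset Printing Implicit Defensive.

(* In an ES configuration an empty lot off the bottom row has occupied left,
   right and lower neighbours, three houses in a row leave the lot below the
   middle one empty, and filling an empty lot blocks its left, right or upper
   neighbour.  Descending from the top row, these rules show that two
   consecutive rows above the bottom one have at most 2y/3 empty lots in their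
   first y columns.  If row i+2 reads 101101..., row i+1 has an empty lot in
   each pair of columns {3s, 3s+1}, and row i has an empty lot before each
   empty lot of row i+1; an empty lot of row i in column 3t+1 would then give
   2t+1 empty lots in the first 3t+1 columns of rows i, i+1.  By left-right
   symmetry row i is also occupied in the columns 3t, so a house of row i above
   an empty lot of row i+2 would be blocked. *)

Lemma blockedE m n (C : config) i j : blocked m n C i j =
  [&& C i j, 1 < j < n, i < m & [&& C i j.-1, C i j.+1 & C i.+1 j]].
Proof. by rewrite /blocked -subn1 !addn1 !andbA. Qed.

Lemma eq_blocked m n (C C' : config) : C =2 C' -> blocked m n C =2 blocked m n C'.
Proof. by move=> eqC i j; rewrite /blocked !eqC. Qed.

Lemma add_house_other (C : config) a b i j :
  (i != a) || (j != b) -> add_house C a b i j = C i j.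
Proof. by rewrite /add_house -negb_and => /negbTE ->. Qed.

Definition mirror (n : nat) (C : config) : config := fun i j => C i (n.+1 - j).

Lemma in_grid_mirror m n i j : in_grid m n i (n.+1 - j) = in_grid m n i j.
Proof. by rewrite /in_grid; apply/idP/idP => /andP[-> ?] /=; lia. Qed.

Lemma blocked_mirror m n C i j : 0 < j <= n ->
  blocked m n (mirror n C) i j = blocked m n C i (n.+1 - j).
Proof.
move=> jn; rewrite !blockedE /mirror.
have [jb|jb] := boolP (1 < j < n); last first.
  have -> : (1 < n.+1 - j < n) = false by apply: negbTE; move: jb; apply: contra; lia.
  by rewrite !andFb !andbF.
have -> : 1 < n.+1 - j < n by lia.
have -> : n.+1 - j.-1 = (n.+1 - j).+1 by lia.
have -> : n.+1 - j.+1 = (n.+1 - j).-1 by lia.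
by rewrite [C i (n.+1 - j).+1 && _]andbCA.
Qed.

Lemma add_house_mirror n C a b : 0 < b <= n ->
  add_house (mirror n C) a b =2 mirror n (add_house C a (n.+1 - b)).
Proof.
move=> bn i j; rewrite /add_house /mirror; congr (_ && _ || _).
by apply/eqP/eqP; lia.
Qed.

Lemma permissible_mirror m n C : permissible m n C -> permissible m n (mirror n C).
Proof.
move=> perm i j gij; rewrite blocked_mirror; last by case/andP: gij.
by apply: perm; rewrite in_grid_mirror.
Qed.

Lemma ES_mirror m n C : ES m n C -> ES m n (mirror n C).
Proof.
case=> [[perm _] pred alt].
have pred' : resistant_predators m n (mirror n C).
  move=> a b gab Cab; have bn : 0 < b <= n by case/andP: gab.
  rewrite (eq_blocked _ _ (add_house_mirror C a bn)) blocked_mirror //.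
  by apply: pred; rewrite ?in_grid_mirror.
split=> //.
  split; first exact: permissible_mirror.
  by move=> a b gab Cab /(_ a b gab); rewrite (pred' a b gab Cab).
move=> a b gab Cab; have bn : 0 < b <= n by case/andP: gab.
have gab' : in_grid m n a (n.+1 - b) by rewrite in_grid_mirror.
have [i [j [gij ij Cij]]] := alt a _ gab' Cab.
exists i, (n.+1 - j); split; rewrite ?in_grid_mirror //.
- move=> [ei jb]; apply: ij; rewrite ei; congr pair.
  by move: gij; rewrite /in_grid; lia.
- by rewrite /mirror subKn //; move: gij; rewrite /in_grid; lia.
- rewrite (eq_blocked _ _ (add_house_mirror C a bn)) blocked_mirror ?subKn //.
  all: by move: gij; rewrite /in_grid; lia.
Qed.

Definition holes_in (f : nat -> bool) (x y : nat) : nat :=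
  count (predC f) (iota x.+1 (y - x)).

Definition holes (f : nat -> bool) (y : nat) : nat := holes_in f 0 y.

Section Holes.
Variable f : nat -> bool.

Lemma holes_in_cat x y z : x <= y <= z ->
  holes_in f x z = holes_in f x y + holes_in f y z.
Proof.
move=> /andP[xy yz]; rewrite /holes_in.
have -> : z - x = (y - x) + (z - y) by lia.
by rewrite iotaD count_cat addSn subnKC.
Qed.

Lemma holes_in1 x : holes_in f x x.+1 = ~~ f x.+1.
Proof. by rewrite /holes_in subSnn /= addn0. Qed.

Lemma holesS y : holes f y.+1 = holes f y + ~~ f y.+1.
Proof. by rewrite /holes (@holes_in_cat 0 y) ?leqnSn // holes_in1. Qed.

Lemma holes_in_gt0P x y :
  reflect (exists2 z, x < z <= y & ~~ f z) (0 < holes_in f x y).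
Proof.
rewrite /holes_in -has_count.
apply: (iffP hasP) => -[z zxy fz]; exists z => //; move: zxy; rewrite ?mem_iota; lia.
Qed.

Lemma holes_in_eq0P x y :
  reflect (forall z, x < z <= y -> f z) (holes_in f x y == 0).
Proof.
apply: (iffP idP) => [h0 z zxy|fxy]; last first.
  by rewrite -leqn0 leqNgt; apply/holes_in_gt0P => -[z /fxy ->].
apply/negPn/negP => fz; move: h0; rewrite -leqn0 leqNgt => /holes_in_gt0P; apply.
by exists z.
Qed.

Lemma holes_in_last x y : x < y -> (forall z, x < z < y -> f z) ->
  holes_in f x y = ~~ f y.
Proof.
case: y => // y xy fxy.
rewrite (@holes_in_cat x y) ?holes_in1; last by rewrite leqnSn andbT -ltnS.
by move/holes_in_eq0P: fxy => /eqP ->.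
Qed.

Lemma holes_in_le1 x y :
  (forall z z', x < z < z' -> z' <= y -> ~~ f z -> ~~ f z' -> False) ->
  holes_in f x y <= 1.
Proof.
elim: y => [|y IH] no2; first by rewrite /holes_in sub0n.
case: (leqP y.+1 x) => [yx|xy]; first by rewrite /holes_in (eqP yx).
rewrite (@holes_in_cat x y) ?holes_in1; last by rewrite leqnSn andbT -ltnS.
case: (boolP (f y.+1)) => fy.
  by rewrite addn0; apply: IH => z z' zz' z'y; apply: no2 zz' (leqW z'y).
suff /eqP -> : holes_in f x y == 0 by [].
apply/holes_in_eq0P => z /andP[xz zy]; apply/negPn/negP => fz.
by apply: (no2 z y.+1) => //; rewrite xz ltnS.
Qed.

Lemma last_hole y :
  exists x, [/\ x <= y, (x == 0) || ~~ f x & forall z, x < z <= y -> f z].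
Proof.
elim: y => [|y [x [xy hx fx]]]; first by exists 0; split => // z; lia.
case: (boolP (f y.+1)) => fy; last by exists y.+1; split => // z; lia.
exists x; split => //; first lia.
move=> z /andP[xz]; rewrite leq_eqVlt => /orP[/eqP -> //|zy].
by apply: fx; lia.
Qed.

End Holes.

Lemma holes_le_by_windows (f g h : nat -> bool) y :
  (forall x z, x < z <= y -> (x == 0) || ~~ h x -> ~~ h z ->
     (forall w, x < w < z -> h w) -> holes_in g x z <= holes_in f x z) ->
  (y == 0) || ~~ h y -> holes g y <= holes f y.
Proof.
elim/ltn_ind: y => y IH win; case: (posnP y) => [-> _|y0 /= hy].
  by rewrite /holes /holes_in.
have [x [xy hx hxy]] := last_hole h y.-1.
have xy' : x < y by lia.
have IHx : holes g x <= holes f x.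
  apply: (IH x xy') (hx) => x' z /andP[xz zx].
  by apply: win; rewrite xz /= (leq_trans zx (ltnW xy')).
have xy'' : 0 <= x <= y by rewrite leq0n (ltnW xy').
rewrite /holes (holes_in_cat g xy'') (holes_in_cat f xy'') leq_add //.
by apply: (win x y) => // [|w /andP[xw wy]]; [rewrite xy' /= | apply: hxy; lia].
Qed.

Lemma two_rows_window (X Y : nat -> bool) k :
  (forall z, k < z <= k.+3 -> X z || Y z) ->
  (forall z, k < z < k.+3 -> X z || X z.+1) ->
  (forall z, k < z < k.+3 -> Y z || Y z.+1) ->
  holes X k.+3 + holes Y k.+3 <= holes X k + holes Y k + 2 +
    ([&& ~~ X k.+1, ~~ Y k.+2 & ~~ X k.+3] || [&& ~~ Y k.+1, ~~ X k.+2 & ~~ Y k.+3]).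
Proof.
move=> col isoX isoY.
have [c1 c2 c3] : [/\ X k.+1 || Y k.+1, X k.+2 || Y k.+2 & X k.+3 || Y k.+3].
  by split; apply: col; lia.
have [x1 x2] : X k.+1 || X k.+2 /\ X k.+2 || X k.+3 by split; apply: isoX; lia.
have [y1 y2] : Y k.+1 || Y k.+2 /\ Y k.+2 || Y k.+3 by split; apply: isoY; lia.
rewrite !holesS; move: c1 c2 c3 x1 x2 y1 y2.
by case: (X k.+1) (X k.+2) (X k.+3) (Y k.+1) (Y k.+2) (Y k.+3) => [] [] [] [] [] [] //= *; lia.
Qed.

Section LocalRules.
Variables (m n : nat) (C : config).
Hypothesis C_ES : ES m n C.

Lemma hole_surrounded r b : 0 < r < m -> 0 < b <= n -> ~~ C r b ->
  [/\ 1 < b < n, C r b.-1, C r b.+1 & C r.+1 b].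
Proof.
move=> rm bn Crb; case: C_ES => _ pred _.
have grb : in_grid m n r b by rewrite /in_grid bn andbT; lia.
move: (pred r b grb Crb); rewrite blockedE => /and4P[_ bn' _ /and3P].
by rewrite !add_house_other //; try lia; case.
Qed.

Lemma occupied_above_hole r b : 0 < r < m -> 0 < b <= n -> ~~ C r.+1 b -> C r b.
Proof. by move=> rm bn; apply: contraR => /(hole_surrounded rm bn) []. Qed.

Lemma hole_below_triple r b : 0 < r < m -> 1 < b < n ->
  C r b.-1 -> C r b -> C r b.+1 -> ~~ C r.+1 b.
Proof.
move=> rm bn l c r'; case: C_ES => [[perm _] _ _].
have grb : in_grid m n r b by rewrite /in_grid; lia.
by apply: contra (perm r b grb) => d; rewrite blockedE c bn l r' d /= andbT; case/andP: rm.
Qed.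

Lemma hole_altruist r b : 0 < r < m -> 0 < b <= n -> ~~ C r b ->
  [\/ [/\ 2 < b, C r b.-2 & C r.+1 b.-1], [/\ b.+2 <= n, C r b.+2 & C r.+1 b.+1] |
      [/\ 1 < r, C r.-1 b.-1, C r.-1 b & C r.-1 b.+1]].
Proof.
move=> rm bn Crb; case: C_ES => [[perm _] _ alt].
have grb : in_grid m n r b by rewrite /in_grid bn andbT; lia.
have [i [j [gij ij Cij]]] := alt r b grb Crb.
rewrite blockedE => /and4P[_ jn im /and3P[l r' d]].
move: gij; rewrite /in_grid => /andP[/andP[i0 _] _].
have [[ei ej]|nl] := eqVneq (i, j.-1) (r, b).
  rewrite ei in d r'; rewrite add_house_other in d; last lia.
  rewrite add_house_other in r'; last lia.
  have ej' : j = b.+1 by lia.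
  by rewrite ej' in d r'; constructor 2; split=> //; lia.
have [[ei ej]|nr] := eqVneq (i, j.+1) (r, b).
  rewrite ei in d l; rewrite add_house_other in d; last lia.
  rewrite add_house_other in l; last lia.
  by rewrite -ej /=; constructor 1; split=> //; lia.
have [[ei ej]|nd] := eqVneq (i.+1, j) (r, b).
  rewrite add_house_other in l; last lia.
  rewrite add_house_other in r'; last lia.
  by rewrite -ei -ej /=; constructor 3; split=> //; lia.
move: nl nr nd; rewrite !xpair_eqE !negb_and => nl nr nd.
have gij : in_grid m n i j by rewrite /in_grid; lia.
move: (perm i j gij); rewrite blockedE Cij jn im.
by rewrite -(add_house_other C nl) -(add_house_other C nr) -(add_house_other C nd) l r' d.
Qed.

Lemma column_one_occupied r : 0 < r < m -> 0 < n -> C r 1.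
Proof. by move=> rm n0; apply/negPn/negP => /(hole_surrounded rm) []; rewrite ?n0. Qed.

Lemma column_holes_apart r z : 0 < r < m -> 0 < z <= n -> C r z || C r.+1 z.
Proof. by move=> rm zn; case: (boolP (C r z)) => //= /(hole_surrounded rm zn) []. Qed.

Lemma row_holes_apart r z : 0 < r < m -> 0 < z < n -> C r z || C r z.+1.
Proof.
move=> rm zn; case: (boolP (C r z)) => //= Crz.
by have [] := hole_surrounded rm (ltac:(lia) : 0 < z <= n) Crz.
Qed.

Lemma hole_above_between r x y : 0 < r -> r.+1 < m -> x < y <= n -> ~~ C r.+1 y ->
  (x == 0) && (2 < y) || (0 < x) && ~~ C r.+1 x -> 0 < holes_in (C r) x y.
Proof.
move=> r0 rm /andP[xy yn] By hx; rewrite lt0n; apply/negP => /holes_in_eq0P Axy.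
have rm0 : 0 < r < m by lia.
have rm1 : 0 < r.+1 < m by lia.
have [yb By1 _ _] := hole_surrounded rm1 (ltac:(lia) : 0 < y <= n) By.
have [y3 Ay1 Ay2] : [/\ 2 < y, C r y.-1 & C r y.-2].
  case/orP: hx => [/andP[/eqP x0 y2]|/andP[x0 Bx]].
    by rewrite x0 in Axy; split=> //; apply: Axy; lia.
  have [xb _ _ _] := hole_surrounded rm1 (ltac:(lia) : 0 < x <= n) Bx.
  have xy1 : x != y.-1 by apply: contraNneq Bx => ->.
  split; [lia | apply: Axy; lia |].
  have [<-|xy2] := eqVneq x y.-2; last by apply: Axy; lia.
  by apply: occupied_above_hole Bx; lia.
have Ay : C r y.-1.+1 by rewrite prednK ?Axy //; lia.
by have := hole_below_triple rm0 (ltac:(lia) : 1 < y.-1 < n) Ay2 Ay1 Ay; rewrite By1.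
Qed.

Lemma holes_le_above r y : 0 < r -> r.+1 < m -> C r.+1 2 -> y <= n ->
  (y == 0) || ~~ C r.+1 y -> holes (C r.+1) y <= holes (C r) y.
Proof.
move=> r0 rm B2 yn; apply: holes_le_by_windows => x z /andP[xz zy] hx Bz Bxz.
rewrite holes_in_last // Bz.
have [z1 _ _ _] := hole_surrounded (ltac:(lia) : 0 < r.+1 < m) (ltac:(lia) : 0 < z <= n) Bz.
have z2 : z != 2 by apply: contraNneq Bz => ->.
apply: hole_above_between => //; first lia.
by case: (posnP x) hx => [->|x0] /= hx; first lia.
Qed.

Lemma holes_two_below_le r y : 0 < r -> r.+2 < m -> y <= n -> ~~ C r.+1 y ->
  holes (C r.+2) y <= holes (C r) y.
Proof.
move=> r0 rm yn By; apply: (holes_le_by_windows (h := C r.+1)); last by rewrite By orbT.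
move=> x z /andP[xz zy] hx Bz Bxz.
have rm1 : 0 < r.+1 < m by lia.
have rm2 : 0 < r.+2 < m by lia.
have [z1 _ _ Cz] := hole_surrounded rm1 (ltac:(lia) : 0 < z <= n) Bz.
have le1 : holes_in (C r.+2) x z <= 1.
  apply: holes_in_le1 => w w' /andP[xw ww'] w'z Cw Cw'.
  have w'z' : w' != z by apply: contraNneq Cw' => ->.
  have [w1 _ _ _] := hole_surrounded rm2 (ltac:(lia) : 0 < w <= n) Cw.
  have /eqP B0 : holes_in (C r.+1) w w' == 0.
    by apply/holes_in_eq0P => v wv; apply: Bxz; lia.
  have hw : (w == 0) && (2 < w') || (0 < w) && ~~ C r.+2 w by rewrite Cw (ltac:(lia) : 0 < w) orbT.
  by have := hole_above_between (ltn0Sn r) rm (ltac:(lia) : w < w' <= n) Cw' hw; rewrite B0.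
case: (posnP (holes_in (C r.+2) x z)) => [-> //|/holes_in_gt0P [w /andP[xw wz] Cw]].
have [w1 _ _ _] := hole_surrounded rm2 (ltac:(lia) : 0 < w <= n) Cw.
have wz' : w != z by apply: contraNneq Cw => ->.
suff : 0 < holes_in (C r) x z by lia.
apply: hole_above_between => //; first lia.
by case: (posnP x) hx => [->|x0] /= hx; first lia.
Qed.

Definition holes2 r y := holes (C r) y + holes (C r.+1) y.

Lemma holes2_small r y : 0 < r -> r.+1 < m -> y <= 2 -> y <= n -> 3 * holes2 r y <= 2 * y.
Proof.
case: y => [|y] r0 rm y2 yn; first by rewrite /holes2 /holes /holes_in.
have [c1 c1'] : C r 1 /\ C r.+1 1 by split; apply: column_one_occupied; lia.
rewrite /holes2; case: y y2 yn => [|[|//]] _ yn; rewrite ?holesS /holes /holes_in /= ?c1 ?c1' //.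
have := column_holes_apart (ltac:(lia) : 0 < r < m) (ltac:(lia) : 0 < 2 <= n).
by case: (C r 2) (C r.+1 2) => [] [].
Qed.

Lemma holes2_window r k : 0 < r -> r.+1 < m -> k.+3 <= n ->
  holes2 r k.+3 <= holes2 r k + 2 +
    ([&& ~~ C r k.+1, ~~ C r.+1 k.+2 & ~~ C r k.+3] ||
     [&& ~~ C r.+1 k.+1, ~~ C r k.+2 & ~~ C r.+1 k.+3]).
Proof.
move=> r0 rm kn; apply: two_rows_window => z zk.
- by apply: column_holes_apart; lia.
- by apply: row_holes_apart; lia.
- by apply: row_holes_apart; lia.
Qed.

Lemma top_rows_descent y : 2 < m ->
  (forall y', y' < y -> 3 * holes2 1 y' <= 2 * y') ->
  (forall y', y' < y -> y'.+2 <= n -> ~~ C 1 y'.+1 -> ~~ C 2 y'.+2 ->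
     3 * holes2 1 y' + 3 <= 2 * y') ->
  y.+2 <= n -> ~~ C 1 y.+1 -> ~~ C 2 y.+2 -> 3 * holes2 1 y + 3 <= 2 * y.
Proof.
move=> m2 IH1 IH2 yn X1 Y2.
have r1 : 0 < 1 < m by lia.
have r2 : 0 < 2 < m by lia.
have [_ Xy _ _] := hole_surrounded r1 (ltac:(lia) : 0 < y.+1 <= n) X1.
have [[y2 Xy1 Yy]|[_ _ Y2']|[]//] := hole_altruist r1 (ltac:(lia) : 0 < y.+1 <= n) X1;
  last by rewrite Y2' in Y2.
case: y y2 yn X1 Y2 IH1 IH2 Xy Xy1 Yy => [|[|[|k]]] // _ kn X1 Y2 IH1 IH2 Xy Xy1 Yy.
  have [c1 c1'] : C 1 1 /\ C 2 1 by split; apply: column_one_occupied; lia.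
  by rewrite /holes2 !holesS /holes /holes_in /= c1 c1' Xy Yy.
rewrite /holes2 !holesS /= Xy1 Xy Yy /=.
case: (boolP (C 2 k.+2)) => Yk2.
  by have := IH1 k.+1 (ltac:(lia)); rewrite /holes2 !holesS; lia.
have [_ Yk1 _ _] := hole_surrounded r2 (ltac:(lia) : 0 < k.+2 <= n) Yk2.
rewrite Yk1 /=.
case: (boolP (C 1 k.+1)) => Xk1.
  by have := IH1 k (ltac:(lia)); rewrite /holes2; lia.
by have := IH2 k (ltac:(lia)) (ltac:(lia)) Xk1 Yk2; rewrite /holes2; lia.
Qed.

Lemma top_rows_bound k : 2 < m -> k.+3 <= n -> 3 * holes2 1 k <= 2 * k ->
  (~~ C 1 k.+1 -> ~~ C 2 k.+2 -> 3 * holes2 1 k + 3 <= 2 * k) ->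
  3 * holes2 1 k.+3 <= 2 * k.+3.
Proof.
move=> m2 kn IH1 IH2; have r1 : 0 < 1 < m by lia.
have := holes2_window (ltnSn 0) m2 kn.
case: (boolP [&& ~~ C 1 k.+1, ~~ C 2 k.+2 & ~~ C 1 k.+3]) => [/and3P[X1 Y2 _]|_] /=.
  by have := IH2 X1 Y2; lia.
case: (boolP [&& ~~ C 2 k.+1, ~~ C 1 k.+2 & ~~ C 2 k.+3]) => [/and3P[Y1 X2 Y3]|_] /=.
  have [[_ _ Y1']|[_ _ Y3']|[]//] := hole_altruist r1 (ltac:(lia) : 0 < k.+2 <= n) X2.
    by rewrite Y1' in Y1.
  by rewrite Y3' in Y3.
lia.
Qed.

Lemma top_rows_density : 2 < m -> forall y, y <= n -> 3 * holes2 1 y <= 2 * y.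
Proof.
(* Row 1 has no row above it to absorb a zigzag of holes, so the induction
   carries a sharper bound after a hole of row 1 followed diagonally by a hole
   of row 2. *)
move=> m2; suff top y : y <= n -> 3 * holes2 1 y <= 2 * y /\
    (y.+2 <= n -> ~~ C 1 y.+1 -> ~~ C 2 y.+2 -> 3 * holes2 1 y + 3 <= 2 * y).
  by move=> y /top [].
elim/ltn_ind: y => y IH yn.
have IH1 y' : y' < y -> 3 * holes2 1 y' <= 2 * y'.
  by move=> y'y; case: (IH y' y'y) => //; lia.
have IH2 y' : y' < y -> y'.+2 <= n -> ~~ C 1 y'.+1 -> ~~ C 2 y'.+2 ->
    3 * holes2 1 y' + 3 <= 2 * y'.
  by move=> y'y; case: (IH y' y'y) => //; lia.
split; last exact: top_rows_descent.
case: (leqP y 2) => [y2|]; first by apply: holes2_small => //; lia.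
case: y IH yn IH1 IH2 => [|[|[|k]]] // _ kn IH1 IH2 _.
by apply: top_rows_bound => //; [apply: IH1 | apply: IH2]; lia.
Qed.

Lemma rows_density_step r : 0 < r -> r.+2 < m ->
  (forall y, y <= n -> 3 * holes2 r y <= 2 * y) ->
  forall y, y <= n -> 3 * holes2 r.+1 y <= 2 * y.
Proof.
(* Three holes in three columns form a zigzag, paid for by row r. *)
move=> r0 rm dens; elim/ltn_ind => y IH yn.
case: (leqP y 2) => [y2|]; first by apply: holes2_small => //; lia.
case: y IH yn => [|[|[|k]]] // IH kn _.
have := holes2_window (ltn0Sn r) rm kn.
case: (boolP [&& ~~ C r.+1 k.+1, ~~ C r.+2 k.+2 & ~~ C r.+1 k.+3]) => [/and3P[_ _ B3]|_] /= W.
  have := holes_two_below_le r0 rm kn B3; have := dens k.+3 kn.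
  by rewrite /holes2; lia.
case: (boolP [&& ~~ C r.+2 k.+1, ~~ C r.+1 k.+2 & ~~ C r.+2 k.+3]) W => [/and3P[C1 B2 C3]|_] /= W;
  last by have := IH k (ltac:(lia)) (ltac:(lia)); lia.
have rm1 : 0 < r.+1 < m by lia.
have [[_ _ C1']|[_ _ C3']|[_ A1 A2 _]] := hole_altruist rm1 (ltac:(lia) : 0 < k.+2 <= n) B2.
- by rewrite C1' in C1.
- by rewrite C3' in C3.
have := holes_two_below_le r0 rm (ltac:(lia) : k.+2 <= n) B2.
rewrite !holesS /= A1 A2 C1 /=.
by have := dens k (ltac:(lia)); move: W; rewrite /holes2; lia.
Qed.

Lemma rows_density r : 0 < r -> r.+1 < m -> forall y, y <= n -> 3 * holes2 r y <= 2 * y.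
Proof.
elim: r => // -[_ _|r IH _ rm]; first exact: top_rows_density.
by apply: rows_density_step => //; apply: IH; lia.
Qed.

Section BelowPattern.
Variable i : nat.
Hypotheses (i0 : 0 < i) (im : i.+2 <= m)
  (pat : forall l, 0 < l <= n -> C i.+2 l = (l %% 3 != 2)).

Lemma below_101_hole s : 0 < s -> 3 * s < n -> ~~ C i.+1 (3 * s) || ~~ C i.+1 (3 * s).+1.
Proof.
move=> s0 sn; rewrite -negb_and; apply/negP => /andP[B0 B1].
have rm1 : 0 < i.+1 < m by lia.
have B' : C i.+1 (3 * s).-1.
  by apply: occupied_above_hole => //; [lia | rewrite pat; lia].
have := hole_below_triple rm1 (ltac:(lia) : 1 < 3 * s < n) B' B0 B1.
by rewrite pat; lia.
Qed.

Lemma below_101_holes t : 3 * t < n -> t <= holes (C i.+1) (3 * t).+1.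
Proof.
elim: t => [|t IH] tn //.
have := below_101_hole (ltn0Sn t) tn; rewrite mulnS !addSn add0n => hb.
have := IH (ltac:(lia)); rewrite !holesS.
by case: (C i.+1 (3 * t).+3) (C i.+1 (3 * t).+4) hb => [] [] //= _; lia.
Qed.

Lemma two_above_101_occupied t : (3 * t).+2 <= n -> C i (3 * t).+1.
Proof.
move=> tn; apply/negPn/negP => A1.
have rm0 : 0 < i < m by lia.
have rm1 : i.+1 < m by lia.
have [_ _ _ B1] := hole_surrounded rm0 (ltac:(lia) : 0 < (3 * t).+1 <= n) A1.
have B2 : C i.+1 2 by apply: occupied_above_hole; rewrite ?pat //; lia.
have Bt : (3 * t == 0) || ~~ C i.+1 (3 * t).
  case: (posnP t) => [-> //|t0].
  by have := below_101_hole t0 (ltac:(lia)); rewrite B1 orbF => ->; rewrite orbT.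
have hAB := holes_le_above i0 rm1 B2 (ltac:(lia) : 3 * t <= n) Bt.
have hB := below_101_holes (ltac:(lia) : 3 * t < n).
have := rows_density i0 rm1 (ltac:(lia) : (3 * t).+1 <= n).
by move: hB; rewrite /holes2 !holesS A1 B1 /=; lia.
Qed.

End BelowPattern.
End LocalRules.

Lemma mirror_101 n (R : nat -> bool) : 3 %| n ->
  (forall l, 0 < l <= n -> R l = (l %% 3 != 2)) ->
  forall l, 0 < l <= n -> R (n.+1 - l) = (l %% 3 != 2).
Proof.
move=> /dvdnP[K ->] pat l ln; rewrite pat; last by lia.
by congr negb; apply/eqP/eqP; lia.
Qed.

Lemma two_above_101_occupied_mirror m n C i t : ES m n C -> 3 %| n -> 0 < i -> i.+2 <= m ->
  (forall l, 0 < l <= n -> C i.+2 l = (l %% 3 != 2)) ->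
  0 < t -> 3 * t <= n -> C i (3 * t).
Proof.
move=> C_ES n3 i0 im pat t0 tn; have [K nK] := dvdnP n3.
have := two_above_101_occupied (ES_mirror C_ES) i0 im (mirror_101 n3 pat) (t := K - t).
rewrite /mirror.
have -> : n.+1 - (3 * (K - t)).+1 = 3 * t by lia.
by apply; lia.
Qed.

Theorem mainTheorem14 (m n : nat) (C : config) (i : nat) :
  ES m n C -> 3 %| n -> 1 <= i -> i + 2 <= m ->
  (forall l, 1 <= l <= n -> C (i + 2) l = (l %% 3 != 2)) ->
  forall j, 1 <= j <= n -> C (i + 2) j = false -> C i j = false.
Proof.
rewrite addn2 => C_ES n3 i0 im pat j jn Pj; apply/negbTE/negP => Cij.
have [K nK] := dvdnP n3.
have [t jt] : exists t, j = (3 * t).+2.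
  by exists (j %/ 3); move: Pj; rewrite pat // => /negbFE/eqP; lia.
rewrite jt {j jt} in jn Pj Cij.
have Cl := two_above_101_occupied C_ES i0 im pat (ltac:(lia) : (3 * t).+2 <= n).
have Cr := two_above_101_occupied_mirror (t := t.+1) C_ES n3 i0 im pat (ltn0Sn t) (ltac:(lia)).
have Cb := occupied_above_hole C_ES (ltac:(lia) : 0 < i.+1 < m) jn (negbT Pj).
rewrite mulnS !addSn add0n in Cr.
have := hole_below_triple C_ES (ltac:(lia) : 0 < i < m) (ltac:(lia) : 1 < (3 * t).+2 < n).
by move/(_ Cl Cij Cr); rewrite Cb.
Qed.
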